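(* Let $q\ge5$ be even. (i) If $q=2^{2m+1}$, then $V_2=0$ and $V_1=q/2$. (ii) If $q=2^{2m}$, then $V_2=0$ and $V_1=\mathcal T_q$.
   Context: For $m'\in\{0,1,2,3\}$, $V_{m'}$ is the number of $\beta\in\mathbb F_q$ such that the cubic equation $t^3-3\beta t^2-1=0$ (in characteristic $2$: $t^3+\beta t^2+1=0$) has exactly $m'$ distinct solutions $t\in\mathbb F_q$. $\mathrm{Tr}_2$ denotes the absolute trace $\mathbb F_q\to\mathbb F_2$, and for $q=2^{2m}$, $\mathcal T_q=\#\{\beta\in\mathbb F_q:\mathrm{Tr}_2(\beta^3)=1\}$. *)

From mathcomp Require Import all_boot all_algebra all_field.
Set Implicit Arguments. Unset Strict Implicit. Unset Printing Implicit Defensive.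
Import GRing.Theory.
Local Open Scope ring_scope.

Definition cubic_sols (F : finFieldType) (b : F) : {set F} :=
  [set t : F | t ^+ 3 + b * t ^+ 2 + 1 == 0].

Definition V (F : finFieldType) (k : nat) : nat :=
  #|[set b : F | #|cubic_sols b| == k]|.

Definition abs_trace (F : finFieldType) (n : nat) (x : F) : F :=
  \sum_(i < n) x ^+ (2 ^ i).

Definition Tq (F : finFieldType) (n : nat) : nat :=
  #|[set b : F | abs_trace n (b ^+ 3) == 1]|.

(* If t is a root of t^3 + b t^2 + 1 (characteristic 2), then t <> 0 and
   b = (t^3 + 1)/t^2, and with y = x t^2 the cubic factors as (x + t) times
   y^2 + y + t^3.  The roots of the Artin-Schreier equation y^2 + y = t^3 come
   in pairs {y, y + 1} and never contain y = t^3, so the cubic has 1 or 3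
   roots, never 2; it has exactly one iff t^3 is not of the form y^2 + y,
   i.e. iff Tr(t^3) = 1.  The latter equivalence is proved by counting: the
   image of y |-> y^2 + y has q/2 elements and lies in the kernel of the
   trace, a set of roots of a polynomial of degree q/2.  Hence
   t |-> (t^3 + 1)/t^2 is a bijection from {t | Tr(t^3) = 1} onto the b with
   one root.  For q = 2^(2m+1) we have q = 2 mod 3, so cubing is a bijection
   of F and the count becomes #{x | Tr x = 1} = q/2. *)

From mathcomp Require Import all_boot all_algebra all_field.
From mathcomp Require Import ring zify.
Set Implicit Arguments. Unset Strict Implicit. Unset Printing Implicit Defensive.
Import GRing.Theory.
Local Open Scope ring_scope.

Lemma addr_eq0_pchar2 (R : nzRingType) : 2 \in [pchar R] ->
  forall x y : R, (x + y == 0) = (x == y).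
Proof. by move=> char2 x y; rewrite addr_eq0 oppr_pchar2. Qed.

Definition artin_schreier {R : pzRingType} (y : R) : R := y ^+ 2 + y.

Section CharTwoCubic.

Variables (F : finFieldType) (char2 : 2 \in [pchar F]).

Lemma eq_artin_schreier (x y : F) :
  (artin_schreier x == artin_schreier y) = (x == y) || (x == y + 1).
Proof.
rewrite -(addr_eq0_pchar2 char2 (artin_schreier x)) -(addr_eq0_pchar2 char2 x y).
rewrite -(addr_eq0_pchar2 char2 x (y + 1)).
have e : (x + y) * (x + (y + 1)) =
          artin_schreier x + artin_schreier y + (x * y + x * y).
  by rewrite /artin_schreier; ring.
by rewrite addrr_pchar2 // addr0 in e; rewrite -e mulf_eq0.
Qed.

Lemma card_artin_schreier_fiber (a : F) :
  #|[set y | artin_schreier y == a]| = if a \in artin_schreier @: setT then 2 else 0.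
Proof.
case: imsetP => [[y0 _ ->] | noAS].
  have -> : [set y | artin_schreier y == artin_schreier y0] = [set y0; y0 + 1].
    by apply/setP => y; rewrite !inE eq_artin_schreier.
  by rewrite cards2 -(addr_eq0_pchar2 char2) addrA addrr_pchar2 // add0r oner_eq0.
apply/eqP; rewrite cards_eq0; apply/eqP/setP => y; rewrite !inE.
by apply/negbTE; apply: contra_notN noAS => /eqP <-; exists y.
Qed.

Lemma card_artin_schreier_image : (#|artin_schreier @: [set: F]| * 2 = #|F|)%N.
Proof.
rewrite -[RHS]sum1_card (partition_big artin_schreier predT) //=.
under eq_bigr => a _ do rewrite sum1dep_card card_artin_schreier_fiber.
by rewrite -big_mkcond sum_nat_const.
Qed.

Lemma mem_cubic_sols (b t : F) :
  (t \in cubic_sols b) = (t != 0) && (b == (t ^+ 3 + 1) / t ^+ 2).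
Proof.
rewrite inE; have [-> | t0] := eqVneq t 0.
  by rewrite !expr0n /= mulr0 !add0r oner_eq0.
have t2_neq0 : t ^+ 2 != 0 by rewrite expf_neq0.
rewrite /= -[b == _](inj_eq (mulIf t2_neq0)) divfK //.
by rewrite -(addr_eq0_pchar2 char2 (b * _)) addrA [b * _ + _]addrC.
Qed.

Lemma cubic_solsE (b t : F) : t \in cubic_sols b ->
  cubic_sols b = t |: [set x | artin_schreier (x * t ^+ 2) == t ^+ 3].
Proof.
rewrite mem_cubic_sols => /andP [t0 /eqP ->]; apply/setP => x; rewrite !inE.
have factor : (x + t) * (artin_schreier (x * t ^+ 2) + t ^+ 3) =
  t ^+ 4 * (x ^+ 3 + (t ^+ 3 + 1) / t ^+ 2 * x ^+ 2 + 1) + (x * t ^+ 3 + x * t ^+ 3).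
  by rewrite /artin_schreier; field.
rewrite addrr_pchar2 // addr0 in factor.
rewrite -(inj_eq (mulfI (expf_neq0 4 t0))) mulr0 -factor mulf_eq0.
by rewrite !(addr_eq0_pchar2 char2).
Qed.

Lemma card_cubic_sols (b t : F) : t \in cubic_sols b ->
  #|cubic_sols b| = #|[set y | artin_schreier y == t ^+ 3]|.+1.
Proof.
move=> tb; have := tb; rewrite mem_cubic_sols => /andP [t0 _].
rewrite (cubic_solsE tb) cardsU1.
have -> : [set x | artin_schreier (x * t ^+ 2) == t ^+ 3] =
          (fun x => x * t ^+ 2) @^-1: [set y | artin_schreier y == t ^+ 3].
  by apply/setP => x; rewrite !inE.
rewrite card_preimset; last exact/mulIf/expf_neq0.
by rewrite !inE {1}/artin_schreier -exprS -subr_eq0 addrK !expf_eq0 (negbTE t0).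
Qed.

Lemma card_cubic_sols_neq2 (b : F) : #|cubic_sols b| != 2.
Proof.
have [-> | [t tb]] := set_0Vmem (cubic_sols b); first by rewrite cards0.
by rewrite (card_cubic_sols tb) card_artin_schreier_fiber; case: ifP.
Qed.

Lemma card_cubic_sols_eq1 (b t : F) : t \in cubic_sols b ->
  (#|cubic_sols b| == 1) = (t ^+ 3 \notin artin_schreier @: setT).
Proof.
by move=> tb; rewrite (card_cubic_sols tb) card_artin_schreier_fiber; case: ifP.
Qed.

Lemma V_2_eq0 : V F 2 = 0%N.
Proof.
apply/eqP; rewrite cards_eq0; apply/eqP/setP => b.
by rewrite !inE (negbTE (card_cubic_sols_neq2 b)).
Qed.

End CharTwoCubic.

Section AbsTrace.

Variables (F : finFieldType) (n : nat).
Hypothesis cardF : #|F| = (2 ^ n)%N.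

Let char2 : 2 \in [pchar F] := card_finPcharP cardF (isT : prime 2).

Let n_gt0 : (0 < n)%N.
Proof. by have := card_finNzRing_gt1 F; rewrite cardF; case: n. Qed.

Lemma abs_traceD (x y : F) : abs_trace n (x + y) = abs_trace n x + abs_trace n y.
Proof.
rewrite /abs_trace -big_split; apply: eq_bigr => i _; apply: exprDn_pchar.
by rewrite (eq_pnat _ (pcharf_eq char2)) pnatX pnat_id.
Qed.

Lemma abs_trace_sqr (x : F) : abs_trace n (x ^+ 2) = abs_trace n x.
Proof.
rewrite /abs_trace; under eq_bigr do rewrite -exprM -expnS.
have recl : \sum_(i < n.+1) x ^+ (2 ^ i) = x + \sum_(i < n) x ^+ (2 ^ i.+1).
  by rewrite big_ord_recl expr1.
have recr : \sum_(i < n.+1) x ^+ (2 ^ i) = \sum_(i < n) x ^+ (2 ^ i) + x.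
  by rewrite big_ord_recr /= -cardF expf_card.
by apply: (addrI x); rewrite -recl recr addrC.
Qed.

Lemma sqr_abs_trace (x : F) : abs_trace n x ^+ 2 = abs_trace n x.
Proof.
rewrite -{2}abs_trace_sqr -(pFrobenius_autE char2) rmorph_sum.
by apply: eq_bigr => i _ /=; rewrite pFrobenius_autE -!exprM mulnC.
Qed.

Lemma abs_trace_eq01 (x : F) : (abs_trace n x == 0) || (abs_trace n x == 1).
Proof.
have : abs_trace n x * (abs_trace n x - 1) == 0.
  by rewrite mulrBr mulr1 -expr2 sqr_abs_trace subrr.
by rewrite mulf_eq0 subr_eq0.
Qed.

Lemma abs_trace_artin_schreier (y : F) : abs_trace n (artin_schreier y) = 0.
Proof. by rewrite abs_traceD abs_trace_sqr addrr_pchar2. Qed.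

Lemma card_abs_trace0_le : (#|[set x : F | abs_trace n x == 0%R]| <= 2 ^ n.-1)%N.
Proof.
pose P : {poly F} := \sum_(i < n) 'X^(2 ^ i).
have rootP x : root P x = (abs_trace n x == 0).
  by rewrite /root horner_sum; under eq_bigr do rewrite hornerXn.
have sizeP : size P = (2 ^ n.-1).+1.
  rewrite /P -(prednK n_gt0) big_ord_recr /= addrC size_polyDl size_polyXn //.
  rewrite (leq_ltn_trans (size_sum _ _ _)) // ltnS.
  by apply/bigmax_leqP => i _; rewrite size_polyXn ltn_exp2l.
have P_neq0 : P != 0 by rewrite -size_poly_eq0 sizeP.
rewrite -ltnS -sizeP cardE; apply: max_poly_roots P_neq0 _ (enum_uniq _).
by apply/allP => x; rewrite mem_enum inE rootP.
Qed.

Let card_artin_schreier_range : #|artin_schreier @: [set: F]| = (2 ^ n.-1)%N.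
Proof.
apply/eqP; rewrite -(eqn_pmul2r (isT : (0 < 2)%N)) card_artin_schreier_image //.
by rewrite -expnSr prednK // cardF.
Qed.

Lemma abs_trace_kerE : [set x : F | abs_trace n x == 0] = artin_schreier @: setT.
Proof.
apply/esym/eqP; rewrite eqEcard card_artin_schreier_range card_abs_trace0_le andbT.
by apply/subsetP => _ /imsetP [y _ ->]; rewrite inE abs_trace_artin_schreier.
Qed.

Lemma abs_trace_eq1 (a : F) : (abs_trace n a == 1) = (a \notin artin_schreier @: setT).
Proof.
rewrite -abs_trace_kerE inE.
by case/orP: (abs_trace_eq01 a) => /eqP ->; rewrite eqxx ?oner_eq0 // eq_sym oner_eq0.
Qed.

Lemma card_abs_trace1 : #|[set x : F | abs_trace n x == 1]| = (2 ^ n.-1)%N.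
Proof.
have /eqP := cardsC (artin_schreier @: [set: F]).
rewrite card_artin_schreier_range cardF -(prednK n_gt0) expnS mul2n -addnn eqn_add2l.
by rewrite prednK // => /eqP <-; apply: eq_card => x; rewrite !inE abs_trace_eq1.
Qed.

Lemma V_1_eq_Tq : V F 1 = Tq F n.
Proof.
pose coef (t : F) := (t ^+ 3 + 1) / t ^+ 2.
set A := [set t : F | abs_trace n (t ^+ 3) == 1].
have sols_coef t : t \in A -> t \in cubic_sols (coef t) /\ #|cubic_sols (coef t)| = 1%N.
  rewrite inE abs_trace_eq1 => t3_notin.
  have t0 : t != 0.
    apply: contraNneq t3_notin => ->; apply/imsetP; exists 0; rewrite ?inE //.
    by rewrite /artin_schreier !expr0n addr0.
  have tb : t \in cubic_sols (coef t) by rewrite (mem_cubic_sols char2) t0 /=.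
  by split=> //; apply/eqP; rewrite (card_cubic_sols_eq1 char2 tb).
have coef_inj : {in A &, injective coef}.
  move=> t1 t2 /sols_coef [t1b /eqP/cards1P [t solsE]] /sols_coef [t2b _] e.
  rewrite -e solsE in t2b; rewrite solsE in t1b.
  by rewrite (set1P t1b) (set1P t2b).
rewrite /V /Tq -(card_in_imset coef_inj); apply: eq_card => b; rewrite inE.
apply/idP/imsetP => [/[dup] card1 /cards1P [t solsE] | [t /sols_coef [_ card1] ->]];
  last by rewrite card1.
have tb : t \in cubic_sols b by rewrite solsE set11.
move: (tb); rewrite (mem_cubic_sols char2) => /andP [_ /eqP b_coef].
exists t; last exact: b_coef.
by rewrite inE abs_trace_eq1 -(card_cubic_sols_eq1 char2 tb) card1.
Qed.

End AbsTrace.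

Lemma expf3K (F : finFieldType) : (#|F| %% 3 = 2)%N ->
  cancel (fun x : F => x ^+ 3) (fun x => x ^+ (#|F| %/ 3).*2.+1).
Proof.
move=> cardF_mod3 x /=; have F_gt0 := ltnW (card_finNzRing_gt1 F).
rewrite -exprM.
have -> : (3 * (#|F| %/ 3).*2.+1 = #|F|.-1 + #|F|)%N.
  by move: cardF_mod3 (divn_eq #|F| 3); lia.
by rewrite exprD expf_card -exprSr prednK // expf_card.
Qed.

Lemma expn2_odd_mod3 n : odd n -> (2 ^ n %% 3 = 2)%N.
Proof.
move=> n_odd; rewrite -(odd_double_half n) n_odd -mul2n expnD expnM.
by rewrite -modnMmr -modnXm exp1n.
Qed.

Theorem lemma4p5 (F : finFieldType) (n : nat) :
  #|F| = (2 ^ n)%N -> (5 <= 2 ^ n)%N ->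
  (odd n -> V F 2 = 0%N /\ V F 1 = (2 ^ n %/ 2)%N) /\
  (~~ odd n -> V F 2 = 0%N /\ V F 1 = Tq F n).
Proof.
case: n => [//|m] cardF _.
have V2 := V_2_eq0 (card_finPcharP cardF (isT : prime 2)).
rewrite (V_1_eq_Tq cardF); split=> [m_odd|]; split=> //.
have cube_inj : injective (fun t : F => t ^+ 3).
  by apply/can_inj/expf3K; rewrite cardF expn2_odd_mod3.
rewrite /Tq expnS mulKn //= -(card_abs_trace1 cardF).
by rewrite -(card_preimset _ cube_inj); apply: eq_card => t; rewrite !inE.
Qed.
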